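(* Let $p\in(0,1)$ and $d\ge2$ an integer. Define the path $$\gamma_1=\Big\{-1+\frac{\sin(\phi(d-1))}{\sin(\phi d)}e^{i\phi}:\ \phi\in[0,\pi/d)\Big\}$$ (the point at $\phi=0$ being $-1/d$, by continuity). Then $v(1+v)^{d-1}\in\mathbb{R}$ for all $v\in\gamma_1$. Moreover, for every $v\in\gamma_1$ and every solution $u$ of $u(1+u)^{d-1}=v(1+v)^{d-1}$ with $u\notin\{v,\bar v\}$, $$\big|u(1/p+u)^{d/p-1}\big|\neq\big|v(1/p+v)^{d/p-1}\big|.$$
   Context: $|z(1/p+z)^{d/p-1}|$ means $|z|\,|1/p+z|^{d/p-1}$. *)

From Stdlib Require Import Reals.
From Coquelicot Require Import Coquelicot.
Open Scope R_scope.

(* Nonnegative base, real exponent: a^x := exp(x ln a) for a > 0, and 0^x := 0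
   (only used with exponent x > 0, where this is the continuous extension). *)
Definition rpow (a x : R) : R := if Rle_dec a 0 then 0 else Rpower a x.

Definition gamma1 (d : nat) (phi : R) : C :=
  if Req_EM_T phi 0 then RtoC (- / INR d)
  else (RtoC (-1) + RtoC (sin (phi * (INR d - 1)) / sin (phi * INR d))
                    * (RtoC (cos phi) + Ci * RtoC (sin phi)))%C.

Definition Fd (d : nat) (z : C) : C := (z * (1 + z) ^ (d - 1))%C.

(* |z (1/p + z)^(d/p - 1)| = |z| |1/p + z|^(d/p - 1) *)
Definition Gp (d : nat) (p : R) (z : C) : R :=
  Cmod z * rpow (Cmod (RtoC (/ p) + z)%C) (INR d / p - 1).

From Stdlib Require Import Reals Lra Lia.
From Coquelicot Require Import Coquelicot.
Open Scope R_scope.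

(* Write n = d - 1 and a = 1/p - 1.  On a level set |z (1 + z)^n|^2 = tau, both |z| and
   |1/p + z| are functions of s = |1 + z|^2 alone, and 2 ln |z (1/p + z)^(d/p - 1)| becomes
   ln tau + Psi s with Psi' of the sign of (n+1) s^(n+1) - n s^n + n (n+1) tau.  By the
   weighted AM-GM inequality this is positive once tau exceeds the squared critical value of
   z (1 + z)^n, taken at z = -1/(n+1), and vanishes at a single s when tau equals it.
   On gamma_1 we have 1 + v = r e^(i phi) with r = sin (n phi) / sin ((n+1) phi), which makes
   v (1 + v)^n real, and the decrease of sin x / x on (0, pi) gives r >= n/(n+1) and
   |v| >= 1/(n+1), so that |v (1 + v)^n|^2 lies above the critical level.  Hence Psi is
   injective, so u and v share |1 + u| and |u|, which forces u = v or u = conj v. *)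

Lemma x_cos_lt_sin x : 0 < x < PI -> x * cos x < sin x.
Proof.
  intros [Hx HxPI].
  destruct (MVT_cor2 (fun t => sin t - t * cos t) (fun t => t * sin t) 0 x Hx)
    as [c [Hc Hcx]].
  { intros c _. apply is_derive_Reals. auto_derive; [easy | ring]. }
  rewrite sin_0, Rmult_0_l, !Rminus_0_r in Hc.
  assert (0 < sin c) by (apply sin_gt_0; lra).
  assert (0 < c * sin c * x) by (repeat apply Rmult_lt_0_compat; lra).
  lra.
Qed.

Lemma sin_div_lt x y : 0 < x < y -> y < PI -> sin y / y < sin x / x.
Proof.
  intros [Hx Hxy] HyPI.
  apply Ropp_lt_cancel.
  apply (incr_function (fun t => - (sin t / t)) 0 PI
           (fun t => (sin t - t * cos t) / t ^ 2)); cbn [Rbar_lt]; try lra.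
  - intros t Ht _. auto_derive; [lra | field; lra].
  - intros t Ht HtPI. apply Rdiv_lt_0_compat.
    + pose proof (x_cos_lt_sin t). lra.
    + apply pow_lt. lra.
Qed.

Lemma INR_div_lt_sin_div j k phi : (0 < j < k)%nat -> 0 < phi -> INR k * phi < PI ->
  INR j / INR k < sin (INR j * phi) / sin (INR k * phi).
Proof.
  intros Hjk Hphi HkPI.
  assert (0 < INR j) by (apply lt_0_INR; lia).
  assert (INR j < INR k) by (apply lt_INR; lia).
  assert (Hsk : 0 < sin (INR k * phi)) by (apply sin_gt_0; nra).
  assert (Hsinc : sin (INR k * phi) / (INR k * phi) < sin (INR j * phi) / (INR j * phi))
    by (apply sin_div_lt; nra).
  apply (Rmult_lt_compat_r (INR j * phi / sin (INR k * phi))) in Hsinc;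
    [| apply Rdiv_lt_0_compat; nra].
  replace (sin (INR k * phi) / (INR k * phi) * (INR j * phi / sin (INR k * phi)))
    with (INR j / INR k) in Hsinc by (field; lra).
  replace (sin (INR j * phi) / (INR j * phi) * (INR j * phi / sin (INR k * phi)))
    with (sin (INR j * phi) / sin (INR k * phi)) in Hsinc by (field; lra).
  exact Hsinc.
Qed.

Lemma pow_lt_pow_l x y n : 0 <= x < y -> (0 < n)%nat -> x ^ n < y ^ n.
Proof.
  intros Hxy Hn. induction n as [|n IH]; [lia|].
  destruct n as [|n]; [simpl; lra|].
  assert (x ^ S n < y ^ S n) by (apply IH; lia).
  assert (0 <= x ^ S n) by (apply pow_le; lra).
  simpl in *. nra.
Qed.

Lemma pow_sub1_mul_sub1_pos x n : 0 < x -> x <> 1 -> (0 < n)%nat ->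
  0 < (x ^ n - 1) * (x - 1).
Proof.
  intros Hx Hx1 Hn. destruct (Rlt_dec x 1) as [Hlt | Hge].
  - assert (x ^ n < 1) by (apply pow_lt_1_compat; lra || lia). nra.
  - assert (1 < x ^ n) by (apply Rlt_pow_R1; lra || lia). nra.
Qed.

Lemma weighted_AM_GM_pow n x : (0 < n)%nat -> 0 < x -> x <> 1 ->
  INR (S n) * x ^ n < INR n * x ^ S n + 1.
Proof.
  intros Hn Hx Hx1. induction n as [|n IH]; [lia|].
  pose proof (pow_sub1_mul_sub1_pos x (S n) Hx Hx1 (Nat.lt_0_succ n)).
  destruct n as [|n]; [simpl in *; nra|].
  specialize (IH (Nat.lt_0_succ n)).
  (* D n := n x^(n+1) - (n+1) x^n + 1 satisfies D (n+1) = x D n + (x^(n+1) - 1) (x - 1). *)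
  rewrite !S_INR in *. simpl pow in *. nra.
Qed.

(* The critical point of z (1 + z)^n is -1/(n+1); crit_modulus n is |1 + z| there and
   crit_level n is |z (1 + z)^n|^2 there. *)
Definition crit_modulus (n : nat) : R := INR n / (INR n + 1).
Definition crit_level (n : nat) : R := (crit_modulus n ^ n / (INR n + 1)) ^ 2.

Lemma crit_modulus_pos n : (0 < n)%nat -> 0 < crit_modulus n.
Proof.
  intros Hn. assert (0 < INR n) by (apply lt_0_INR, Hn).
  apply Rdiv_lt_0_compat; lra.
Qed.

Lemma crit_level_pos n : (0 < n)%nat -> 0 < crit_level n.
Proof.
  intros Hn. pose proof (pos_INR n).
  apply pow_lt, Rdiv_lt_0_compat; [apply pow_lt, crit_modulus_pos, Hn | lra].
Qed.

(* On the level set |Fd (S n) z|^2 = tau, with s = |1 + z|^2 and a = 1/p - 1, one has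
   |1/p + z|^2 = shift_sq s and 2 ln (Gp (S n) p z) = ln tau + Psi s. *)
Section Psi.

Variables (n : nat) (a tau : R).

Definition shift_sq (s : R) : R := (1 + a) * s + a + a ^ 2 - a * tau / s ^ n.

Definition Psi (s : R) : R :=
  ((INR n + 1) * (1 + a) - 1) * ln (shift_sq s) - INR n * ln s.

Definition dPsi_numer (s : R) : R :=
  (INR n + 1) * s ^ S n - INR n * s ^ n + INR n * (INR n + 1) * tau.

Hypotheses (Hn : (0 < n)%nat) (Ha : 0 < a) (Htau : 0 <= tau).

Lemma dPsi_numer_pos s : 0 < s -> crit_level n <= tau ->
  (crit_level n < tau \/ s <> crit_modulus n ^ 2) -> 0 < dPsi_numer s.
Proof.
  intros Hs Hcrit Hstrict.
  assert (HN : 0 < INR n) by (apply lt_0_INR, Hn).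
  pose proof (crit_modulus_pos n Hn) as Hy.
  set (y := crit_modulus n) in *.
  set (x := s / y ^ 2).
  assert (Hx : 0 < x) by (apply Rdiv_lt_0_compat; [lra | apply pow_lt; lra]).
  assert (Es : s = y * y * x) by (unfold x; field; lra).
  assert (E : dPsi_numer s = y * y ^ n * y ^ n * (INR n * x ^ S n - INR (S n) * x ^ n + 1)
                             + INR n * (INR n + 1) * (tau - crit_level n)).
  { unfold dPsi_numer, crit_level. fold y. rewrite Es, S_INR.
    simpl pow. rewrite !Rpow_mult_distr.
    set (Y := y ^ n). set (X := x ^ n). unfold y, crit_modulus. field. lra. }
  rewrite E.
  assert (Hyn : 0 < y ^ n) by (apply pow_lt; exact Hy).
  assert (0 < y * y ^ n * y ^ n)
    by (apply Rmult_lt_0_compat; [apply Rmult_lt_0_compat|]; assumption).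
  assert (0 < INR n * (INR n + 1)) by nra.
  destruct (Req_dec x 1) as [Hx1 | Hx1].
  - assert (Hlt : crit_level n < tau).
    { destruct Hstrict as [|Hne]; [assumption|].
      exfalso. apply Hne. rewrite Es, Hx1. ring. }
    rewrite Hx1, !pow1, S_INR. nra.
  - pose proof (weighted_AM_GM_pow n x Hn Hx Hx1). nra.
Qed.

Lemma shift_sq_le s s' : 0 < s <= s' -> shift_sq s <= shift_sq s'.
Proof.
  intros [Hs Hss']. unfold shift_sq, Rdiv.
  assert (0 < s ^ n) by (apply pow_lt; lra).
  assert (s ^ n <= s' ^ n) by (apply pow_incr; lra).
  assert (/ s' ^ n <= / s ^ n) by (apply Rinv_le_contravar; lra).
  assert (0 <= a * tau) by nra.
  nra.
Qed.

Lemma is_derive_Psi s : 0 < s -> 0 < shift_sq s ->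
  is_derive Psi s (a * (1 + a) * dPsi_numer s / (s ^ S n * shift_sq s)).
Proof.
  intros Hs Hshift. unfold Psi.
  assert (Hsn : 0 < s ^ n) by (apply pow_lt; exact Hs).
  unfold shift_sq at 1 2. auto_derive.
  - unfold shift_sq, Rdiv in Hshift. replace (a * (a * 1)) with (a ^ 2) by ring. lra.
  - assert (Epred : s ^ n = s * s ^ pred n) by (destruct n; [lia | reflexivity]).
    unfold dPsi_numer, shift_sq in *. change (s ^ S n) with (s * s ^ n).
    rewrite Epred in *. set (M := s ^ pred n) in *.
    assert (0 < M) by (apply pow_lt; exact Hs).
    field. repeat split; try lra.
    replace (((1 + a) * s + a + a ^ 2) * (s * M) - a * tau)
      with (((1 + a) * s + a + a ^ 2 - a * tau / (s * M)) * (s * M)) by (field; lra).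
    apply Rgt_not_eq, Rmult_lt_0_compat; assumption.
Qed.

Lemma Psi_lt lo hi : 0 < lo < hi -> 0 < shift_sq lo ->
  (forall c, lo < c < hi -> 0 < dPsi_numer c) -> Psi lo < Psi hi.
Proof.
  intros [Hlo Hlohi] Hshift Hnumer.
  assert (Hshift_c : forall c, lo <= c -> 0 < shift_sq c).
  { intros c Hc. apply (Rlt_le_trans _ _ _ Hshift), shift_sq_le. lra. }
  destruct (MVT_cor2 Psi (fun c => a * (1 + a) * dPsi_numer c / (c ^ S n * shift_sq c))
              lo hi Hlohi) as [c [Hc Hlc]].
  { intros c Hc. apply is_derive_Reals, is_derive_Psi; [lra | apply Hshift_c; lra]. }
  assert (0 < a * (1 + a) * dPsi_numer c / (c ^ S n * shift_sq c)).
  { apply Rdiv_lt_0_compat.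
    - apply Rmult_lt_0_compat; [nra | apply Hnumer; lra].
    - apply Rmult_lt_0_compat; [apply pow_lt; lra | apply Hshift_c; lra]. }
  assert (0 < a * (1 + a) * dPsi_numer c / (c ^ S n * shift_sq c) * (hi - lo))
    by (apply Rmult_lt_0_compat; lra).
  lra.
Qed.

(* At the critical level dPsi_numer vanishes at crit_modulus n ^ 2, which then has to be
   an endpoint of the interval on which Psi is compared. *)
Lemma Psi_neq s1 s2 : crit_level n <= tau ->
  (crit_level n < tau \/ s2 = crit_modulus n ^ 2) ->
  0 < s1 -> 0 < s2 -> 0 < shift_sq s1 -> 0 < shift_sq s2 -> s1 <> s2 -> Psi s1 <> Psi s2.
Proof.
  intros Hcrit Hstrict Hs1 Hs2 Hshift1 Hshift2 Hne.
  assert (Hnumer : forall c, 0 < c -> c <> s2 -> 0 < dPsi_numer c).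
  { intros c Hc Hcs2. apply dPsi_numer_pos; [lra | lra |].
    destruct Hstrict as [Hlt | Heq]; [left; exact Hlt | right; rewrite <- Heq; exact Hcs2]. }
  destruct (Rlt_or_le s1 s2) as [Hlt | Hle].
  - apply Rlt_not_eq, Psi_lt; [lra | assumption |].
    intros c Hc. apply Hnumer; lra.
  - apply not_eq_sym, Rlt_not_eq, Psi_lt; [lra | assumption |].
    intros c Hc. apply Hnumer; lra.
Qed.

End Psi.

Lemma Fd_succ n z : Fd (S n) z = (z * (1 + z) ^ n)%C.
Proof. unfold Fd. rewrite Nat.sub_succ, Nat.sub_0_r. reflexivity. Qed.

Lemma Cmod_Fd_sq n z : Cmod (Fd (S n) z) ^ 2 = Cmod z ^ 2 * (Cmod (1 + z) ^ 2) ^ n.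
Proof.
  rewrite Fd_succ, Cmod_mult, Cmod_pow, Rpow_mult_distr, <- !pow_mult, Nat.mul_comm.
  reflexivity.
Qed.

Lemma eq_or_conj_of_Cmod_sq u v :
  Cmod (1 + u) ^ 2 = Cmod (1 + v) ^ 2 -> Cmod u ^ 2 = Cmod v ^ 2 -> u = v \/ u = Cconj v.
Proof.
  destruct u as [x y], v as [x' y']. rewrite !Cmod2_alt. cbn.
  intros H1 H2. assert (x = x') as <- by nra.
  assert (Hy : (y - y') * (y + y') = 0) by nra.
  destruct (Rmult_integral _ _ Hy); [left | right]; unfold Cconj; cbn; f_equal; lra.
Qed.

Lemma Cmod_shift_sq a z :
  Cmod (RtoC (1 + a) + z) ^ 2 = (1 + a) * Cmod (1 + z) ^ 2 + a + a ^ 2 - a * Cmod z ^ 2.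
Proof. rewrite !Cmod2_alt. destruct z as [x y]. cbn. ring. Qed.

Lemma Cmod_sq_on_level n z tau : (0 < n)%nat -> Cmod (Fd (S n) z) ^ 2 = tau -> 0 < tau ->
  0 < Cmod (1 + z) ^ 2 /\ Cmod z ^ 2 = tau / (Cmod (1 + z) ^ 2) ^ n.
Proof.
  intros Hn Hlevel Htau. rewrite Cmod_Fd_sq in Hlevel.
  assert (Hs : 0 < Cmod (1 + z) ^ 2).
  { destruct (Rle_lt_or_eq_dec 0 _ (pow2_ge_0 (Cmod (1 + z)))) as [|Hs0]; [assumption|].
    rewrite <- Hs0, pow_i in Hlevel by exact Hn. lra. }
  split; [exact Hs|].
  rewrite <- Hlevel. field. apply pow_nonzero. lra.
Qed.

Lemma ln_Gp n p z tau : (0 < n)%nat -> 0 < p -> Cmod (Fd (S n) z) ^ 2 = tau -> 0 < tau ->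
  0 < Gp (S n) p z ->
  0 < shift_sq n (/ p - 1) tau (Cmod (1 + z) ^ 2) /\
  2 * ln (Gp (S n) p z) = ln tau + Psi n (/ p - 1) tau (Cmod (1 + z) ^ 2).
Proof.
  intros Hn Hp Hlevel Htau HG.
  destruct (Cmod_sq_on_level n z tau Hn Hlevel Htau) as [Hs Hz].
  set (a := / p - 1). set (s := Cmod (1 + z) ^ 2) in *.
  assert (Hshift : Cmod (RtoC (/ p) + z) ^ 2 = shift_sq n a tau s).
  { replace (/ p) with (1 + a) by (unfold a; ring).
    rewrite Cmod_shift_sq, Hz. fold s. unfold shift_sq. field. apply pow_nonzero. lra. }
  unfold Gp, rpow in *.
  destruct (Rle_dec (Cmod (RtoC (/ p) + z)) 0) as [Hle | Hgt]; [lra|].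
  apply Rnot_le_lt in Hgt.
  assert (Hz0 : 0 < Cmod z).
  { assert (0 < Rpower (Cmod (RtoC (/ p) + z)) (INR (S n) / p - 1)) by apply exp_pos.
    pose proof (Cmod_ge_0 z). nra. }
  split; [rewrite <- Hshift; apply pow_lt, Hgt|].
  rewrite ln_mult, ln_Rpower by (try apply exp_pos; exact Hz0).
  assert (E1 : 2 * ln (Cmod z) = ln tau - INR n * ln s).
  { transitivity (ln (Cmod z ^ 2)); [rewrite ln_pow by exact Hz0; simpl INR; ring|].
    assert (Hsn : 0 < s ^ n) by (apply pow_lt, Hs).
    rewrite Hz. unfold Rdiv.
    rewrite ln_mult, ln_Rinv, ln_pow;
      [ring | exact Hs | exact Hsn | exact Htau | apply Rinv_0_lt_compat, Hsn]. }
  assert (E2 : 2 * ln (Cmod (RtoC (/ p) + z)) = ln (shift_sq n a tau s))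
    by (rewrite <- Hshift, ln_pow by exact Hgt; reflexivity).
  unfold Psi. rewrite <- E2, S_INR, Rmult_plus_distr_l, E1. unfold a.
  field. lra.
Qed.

Lemma Gp_pos d p (z : C) : 0 < p < 1 -> z <> 0 -> -1 <= Re z -> 0 < Gp d p z.
Proof.
  intros Hp Hz HRe. unfold Gp, rpow.
  assert (Hinv : 1 < / p) by (rewrite <- Rinv_1; apply Rinv_lt_contravar; lra).
  assert (Hshift : 0 < Cmod (RtoC (/ p) + z)).
  { eapply Rlt_le_trans; [| apply (Rle_trans _ _ _ (Rle_abs _) (re_le_Cmod _))].
    unfold Re, Cplus, RtoC in *. cbn. lra. }
  destruct (Rle_dec (Cmod (RtoC (/ p) + z)) 0); [lra|].
  apply Rmult_lt_0_compat; [apply Cmod_gt_0, Hz | apply exp_pos].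
Qed.

Lemma crit_level_le_Cmod_Fd_sq n v : (0 < n)%nat ->
  crit_modulus n <= Cmod (1 + v) -> / (INR n + 1) <= Cmod v ->
  crit_level n <= Cmod (Fd (S n) v) ^ 2 /\
  (crit_level n < Cmod (Fd (S n) v) ^ 2 \/ Cmod (1 + v) ^ 2 = crit_modulus n ^ 2).
Proof.
  intros Hn Hm Hw.
  pose proof (crit_modulus_pos n Hn) as Hc.
  assert (Hinv : 0 < / (INR n + 1)) by (pose proof (pos_INR n); apply Rinv_0_lt_compat; lra).
  assert (Hcn : 0 < crit_modulus n ^ n) by (apply pow_lt; exact Hc).
  assert (Hle : crit_modulus n ^ n <= Cmod (1 + v) ^ n) by (apply pow_incr; lra).
  assert (Etau : Cmod (Fd (S n) v) ^ 2 = (Cmod v * Cmod (1 + v) ^ n) ^ 2)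
    by (rewrite Cmod_Fd_sq, <- !pow_mult, Nat.mul_comm, pow_mult; ring).
  unfold crit_level. rewrite Etau, (Rmult_comm (Cmod v)). unfold Rdiv.
  assert (Hb : crit_modulus n ^ n * / (INR n + 1) <= Cmod (1 + v) ^ n * Cmod v)
    by (apply Rmult_le_compat; lra).
  split; [apply pow_incr; nra|].
  destruct (Req_dec (Cmod (1 + v)) (crit_modulus n)) as [Heq | Hne].
  - right. rewrite Heq. reflexivity.
  - left. apply pow_lt_pow_l; [|lia]. split; [nra|].
    assert (crit_modulus n ^ n < Cmod (1 + v) ^ n) by (apply pow_lt_pow_l; [lra | exact Hn]).
    nra.
Qed.

Lemma Gp_eq_on_level n p u v : (0 < n)%nat -> 0 < p < 1 ->
  crit_level n <= Cmod (Fd (S n) v) ^ 2 ->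
  (crit_level n < Cmod (Fd (S n) v) ^ 2 \/ Cmod (1 + v) ^ 2 = crit_modulus n ^ 2) ->
  0 < Gp (S n) p v -> Fd (S n) u = Fd (S n) v -> Gp (S n) p u = Gp (S n) p v ->
  u = v \/ u = Cconj v.
Proof.
  intros Hn Hp Hcrit Hstrict HGv Hu HG.
  set (tau := Cmod (Fd (S n) v) ^ 2) in *.
  assert (Htau : 0 < tau) by (eapply Rlt_le_trans; [apply crit_level_pos, Hn | exact Hcrit]).
  assert (Ha : 0 < / p - 1)
    by (assert (1 < / p) by (rewrite <- Rinv_1; apply Rinv_lt_contravar; lra); lra).
  assert (Hlevel_u : Cmod (Fd (S n) u) ^ 2 = tau) by (rewrite Hu; reflexivity).
  destruct (ln_Gp n p u tau Hn (proj1 Hp) Hlevel_u Htau) as [Hshift_u Hln_u]; [lra|].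
  destruct (ln_Gp n p v tau Hn (proj1 Hp) eq_refl Htau HGv) as [Hshift_v Hln_v].
  destruct (Cmod_sq_on_level n u tau Hn Hlevel_u Htau) as [Hsu Hzu].
  destruct (Cmod_sq_on_level n v tau Hn eq_refl Htau) as [Hsv Hzv].
  destruct (Req_dec (Cmod (1 + u) ^ 2) (Cmod (1 + v) ^ 2)) as [Hs | Hs].
  - apply eq_or_conj_of_Cmod_sq; [exact Hs | rewrite Hzu, Hzv, Hs; reflexivity].
  - exfalso. apply (Psi_neq n (/ p - 1) tau Hn Ha (Rlt_le _ _ Htau) _ _ Hcrit Hstrict
                    Hsu Hsv Hshift_u Hshift_v Hs).
    rewrite HG in Hln_u. lra.
Qed.

Definition polar (r phi : R) : C := (r * cos phi, r * sin phi).

Lemma Cmod_polar r phi : 0 <= r -> Cmod (polar r phi) = r.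
Proof.
  intros Hr. unfold Cmod, polar. cbn [fst snd].
  transitivity (sqrt (r ^ 2)); [f_equal | apply sqrt_pow2, Hr].
  transitivity (r ^ 2 * (Rsqr (sin phi) + Rsqr (cos phi))); [unfold Rsqr; ring|].
  rewrite sin2_cos2. ring.
Qed.

Lemma Cpow_polar r phi n : (polar r phi ^ n)%C = polar (r ^ n) (INR n * phi).
Proof.
  induction n as [|n IH].
  - unfold polar. cbn. rewrite Rmult_0_l, cos_0, sin_0. unfold RtoC. f_equal; ring.
  - rewrite Cpow_S, IH, S_INR. unfold polar, Cmult. cbn.
    replace ((INR n + 1) * phi) with (INR n * phi + phi) by ring.
    rewrite cos_plus, sin_plus. f_equal; ring.
Qed.

Lemma Im_Fd_polar n r phi :
  Im (Fd (S n) (polar r phi - 1)) = r ^ n * (r * sin (INR (S n) * phi) - sin (INR n * phi)).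
Proof.
  rewrite Fd_succ.
  replace (1 + (polar r phi - 1))%C with (polar r phi) by ring.
  replace ((polar r phi - 1) * polar r phi ^ n)%C
    with (polar r phi ^ S n - polar r phi ^ n)%C by (rewrite Cpow_S; ring).
  rewrite !Cpow_polar. unfold polar, Im, Cminus, Cplus, Copp. cbn. ring.
Qed.

Lemma Cmod_polar_sub1_sq r phi : Cmod (polar r phi - 1) ^ 2 = r ^ 2 - 2 * r * cos phi + 1.
Proof.
  rewrite Cmod2_alt. unfold polar. cbn.
  transitivity (r ^ 2 * (Rsqr (sin phi) + Rsqr (cos phi)) - 2 * r * cos phi + 1);
    [unfold Rsqr; ring|].
  rewrite sin2_cos2. ring.
Qed.

Lemma INR_mult_lt_PI n phi : phi < PI / INR (S n) -> INR (S n) * phi < PI.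
Proof.
  intros HphiPI.
  assert (HSn : 0 < INR (S n)) by (apply lt_0_INR; lia).
  apply (Rmult_lt_compat_l (INR (S n))) in HphiPI; [|exact HSn].
  replace (INR (S n) * (PI / INR (S n))) with PI in HphiPI by (field; lra).
  exact HphiPI.
Qed.

Lemma sin_INR_mult_pos k n phi : (0 < k <= S n)%nat -> 0 < phi < PI / INR (S n) ->
  0 < sin (INR k * phi).
Proof.
  intros Hk [Hphi HphiPI].
  pose proof (INR_mult_lt_PI n phi HphiPI).
  assert (INR k <= INR (S n)) by (apply le_INR; lia).
  assert (0 < INR k) by (apply lt_0_INR; lia).
  apply sin_gt_0; nra.
Qed.

Definition gamma1_radius (n : nat) (phi : R) : R :=
  if Req_EM_T phi 0 then crit_modulus n else sin (INR n * phi) / sin (INR (S n) * phi).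

Lemma gamma1_radius_0 n : gamma1_radius n 0 = crit_modulus n.
Proof. unfold gamma1_radius. destruct (Req_EM_T 0 0); [reflexivity | congruence]. Qed.

Lemma gamma1_radius_pos n phi : 0 < phi ->
  gamma1_radius n phi = sin (INR n * phi) / sin (INR (S n) * phi).
Proof. intros Hphi. unfold gamma1_radius. destruct (Req_EM_T phi 0); [lra | reflexivity]. Qed.

Lemma gamma1_polar n phi : gamma1 (S n) phi = (polar (gamma1_radius n phi) phi - 1)%C.
Proof.
  unfold gamma1, gamma1_radius, polar, crit_modulus.
  assert (0 < INR n + 1) by (pose proof (pos_INR n); lra).
  destruct (Req_EM_T phi 0) as [->|_]; rewrite S_INR.
  - rewrite cos_0, sin_0. unfold RtoC, Cminus, Cplus, Copp. cbn. f_equal; field; lra.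
  - replace (phi * (INR n + 1 - 1)) with (INR n * phi) by ring.
    replace (phi * (INR n + 1)) with ((INR n + 1) * phi) by ring.
    unfold RtoC, Cminus, Cplus, Copp, Cmult, Ci. cbn. f_equal; ring.
Qed.

Lemma gamma1_radius_sin n phi : 0 <= phi < PI / INR (S n) ->
  gamma1_radius n phi * sin (INR (S n) * phi) = sin (INR n * phi).
Proof.
  intros Hrange. destruct (Rle_lt_or_eq_dec 0 phi (proj1 Hrange)) as [Hphi | <-].
  - assert (0 < sin (INR (S n) * phi))
      by (apply (sin_INR_mult_pos (S n) n); [lia | lra]).
    rewrite gamma1_radius_pos by exact Hphi. field. lra.
  - rewrite !Rmult_0_r, sin_0. ring.
Qed.

Lemma crit_modulus_le_gamma1_radius n phi : (0 < n)%nat -> 0 <= phi < PI / INR (S n) ->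
  crit_modulus n <= gamma1_radius n phi.
Proof.
  intros Hn Hrange. destruct (Rle_lt_or_eq_dec 0 phi (proj1 Hrange)) as [Hphi | <-].
  - rewrite gamma1_radius_pos by exact Hphi. unfold crit_modulus. rewrite <- S_INR.
    apply Rlt_le, INR_div_lt_sin_div; [lia | exact Hphi | apply INR_mult_lt_PI; lra].
  - rewrite gamma1_radius_0. lra.
Qed.

(* Law of sines in the triangle with vertices -1, 0 and gamma1 (S n) phi. *)
Lemma Cmod_gamma1_sq n phi : 0 < phi < PI / INR (S n) ->
  Cmod (gamma1 (S n) phi) ^ 2 = (sin phi / sin (INR (S n) * phi)) ^ 2.
Proof.
  intros Hrange.
  assert (Hsd : 0 < sin (INR (S n) * phi)) by (apply (sin_INR_mult_pos (S n) n); [lia | lra]).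
  rewrite gamma1_polar, Cmod_polar_sub1_sq, gamma1_radius_pos by lra.
  assert (Hadd : sin (INR (S n) * phi) = sin (INR n * phi) * cos phi + cos (INR n * phi) * sin phi)
    by (rewrite <- sin_plus, S_INR; f_equal; ring).
  pose proof (sin2_cos2 phi) as Hpyth. pose proof (sin2_cos2 (INR n * phi)) as Hpyth_n.
  set (Sd := sin (INR (S n) * phi)) in *. set (Sn := sin (INR n * phi)) in *.
  set (Cn := cos (INR n * phi)) in *. unfold Rsqr in *.
  transitivity ((Sn ^ 2 - 2 * Sn * Sd * cos phi + Sd ^ 2) / Sd ^ 2); [field; lra|].
  replace (Sn ^ 2 - 2 * Sn * Sd * cos phi + Sd ^ 2)
    with (sin phi ^ 2 * (Sn * Sn + Cn * Cn) + Sn ^ 2 * (1 - (sin phi * sin phi + cos phi * cos phi)))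
    by (rewrite Hadd; ring).
  rewrite Hpyth, Hpyth_n. field. lra.
Qed.

Lemma inv_le_Cmod_gamma1 n phi : (0 < n)%nat -> 0 <= phi < PI / INR (S n) ->
  / (INR n + 1) <= Cmod (gamma1 (S n) phi).
Proof.
  intros Hn Hrange. pose proof (pos_INR n).
  destruct (Rle_lt_or_eq_dec 0 phi (proj1 Hrange)) as [Hphi | <-].
  - assert (Hlt : INR 1 / INR (S n) < sin (INR 1 * phi) / sin (INR (S n) * phi))
      by (apply INR_div_lt_sin_div; [lia | exact Hphi | apply INR_mult_lt_PI; lra]).
    change (INR 1) with 1 in Hlt. rewrite Rmult_1_l in Hlt.
    replace (1 / INR (S n)) with (/ (INR n + 1)) in Hlt by (rewrite S_INR; field; lra).
    pose proof (Cmod_gamma1_sq n phi (conj Hphi (proj2 Hrange))).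
    pose proof (Cmod_ge_0 (gamma1 (S n) phi)).
    assert (0 < / (INR n + 1)) by (apply Rinv_0_lt_compat; lra).
    nra.
  - unfold gamma1. destruct (Req_EM_T 0 0) as [_|]; [|congruence].
    rewrite Cmod_R, Rabs_Ropp, S_INR, Rabs_pos_eq; [lra|].
    apply Rlt_le, Rinv_0_lt_compat. lra.
Qed.

Lemma Re_gamma1_ge n phi : (0 < n)%nat -> 0 <= phi < PI / INR (S n) ->
  -1 <= Re (gamma1 (S n) phi).
Proof.
  intros Hn Hrange.
  assert (Hr : 0 <= gamma1_radius n phi).
  { apply (Rle_trans _ (crit_modulus n)); [|apply crit_modulus_le_gamma1_radius; assumption].
    apply Rlt_le, crit_modulus_pos, Hn. }
  assert (Hcos : 0 <= cos phi).
  { pose proof (INR_mult_lt_PI n phi (proj2 Hrange)).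
    assert (2 <= INR (S n)) by (apply (le_INR 2); lia).
    apply cos_ge_0; nra. }
  rewrite gamma1_polar. unfold polar, Re, Cminus, Cplus, Copp. cbn. nra.
Qed.

Theorem lemma5p6 (p : R) (d : nat) :
  0 < p < 1 -> (2 <= d)%nat ->
  forall phi : R, 0 <= phi < PI / INR d ->
  let v := gamma1 d phi in
  Im (Fd d v) = 0 /\
  (forall u : C, Fd d u = Fd d v -> u <> v -> u <> Cconj v ->
     Gp d p u <> Gp d p v).
Proof.
  intros Hp Hd phi Hrange v.
  destruct d as [|n]; [lia|]. assert (Hn : (0 < n)%nat) by lia.
  pose proof (crit_modulus_le_gamma1_radius n phi Hn Hrange) as Hr.
  pose proof (inv_le_Cmod_gamma1 n phi Hn Hrange) as Hv_ge.
  assert (Hv : v = (polar (gamma1_radius n phi) phi - 1)%C) by apply gamma1_polar.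
  assert (H1v : Cmod (1 + v) = gamma1_radius n phi).
  { rewrite Hv. replace (1 + (polar (gamma1_radius n phi) phi - 1))%C
      with (polar (gamma1_radius n phi) phi) by ring.
    apply Cmod_polar. pose proof (crit_modulus_pos n Hn). lra. }
  destruct (crit_level_le_Cmod_Fd_sq n v Hn) as [Hcrit Hstrict]; [lra | exact Hv_ge |].
  split.
  - rewrite Hv, Im_Fd_polar, gamma1_radius_sin by exact Hrange. ring.
  - intros u Hu Huv Huc HG.
    assert (HGv : 0 < Gp (S n) p v).
    { apply Gp_pos; [exact Hp | | apply Re_gamma1_ge; assumption].
      apply Cmod_gt_0. pose proof (pos_INR n).
      assert (0 < / (INR n + 1)) by (apply Rinv_0_lt_compat; lra). unfold v. lra. }
    destruct (Gp_eq_on_level n p u v Hn Hp Hcrit Hstrict HGv Hu HG); contradiction.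
Qed.
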